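(* For every $n\ge1$, with $M_n$ the array indexed by $\{0,\dots,n\}^3$ defined by $(M_n)_{i,j,k}=\min\big(k\min(i,j),\ ij-(n-k)\max(0,i+j-n)\big)$, $$\sum_{0\le i,j,k\le n}(M_n)_{i,j,k}=\frac{69n^5+180n^4+170n^3+60n^2+4^{1+(-1)^n}\,n}{480}.$$
   Context: $M_n$ is the minimum element of the lattice of corner-sum hypermatrices of order $n$ (ordered by reverse entrywise comparison), i.e. the entrywise largest corner-sum hypermatrix. *)

From mathcomp Require Import all_boot all_order all_algebra.
Set Implicit Arguments. Unset Strict Implicit. Unset Printing Implicit Defensive.
Import Order.TTheory GRing.Theory Num.Theory.
Local Open Scope ring_scope.

Definition Mentry (n i j k : nat) : int :=
  Num.min ((k%:Z) * (Num.min (i%:Z) (j%:Z)))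
          ((i%:Z) * (j%:Z) - ((n%:Z) - (k%:Z)) * (Num.max 0 ((i%:Z) + (j%:Z) - (n%:Z)))).

From mathcomp Require Import all_boot all_order all_algebra.
From mathcomp Require Import ring zify.
Set Implicit Arguments. Unset Strict Implicit. Unset Printing Implicit Defensive.
Import Order.TTheory GRing.Theory Num.Theory.
Local Open Scope ring_scope.

(* For i <= j the entry (M_n)_{i,j,k} is linear in k on each side of the threshold
   t = min(j, n - i), so every line sum over k is an explicit polynomial; the row sums
   over j are then polynomials in (n, i), with one formula for 2i <= n and another for
   2i > n, and the total is obtained by summing them over i.  Each of these sums over a
   range of integers is evaluated by exhibiting an indefinite sum and telescoping, and
   the parity term of the closed form comes from where the row formula switches. *)

Lemma big_nat_antidiff (R : pzRingType) (F : nat -> R) (G : R -> R) (a b : nat) :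
  (a <= b)%N -> (forall k, (a <= k < b)%N -> F k = G (k%:R + 1) - G k%:R) ->
  \sum_(a <= k < b) F k = G b%:R - G a%:R.
Proof.
move=> ab FG; rewrite -(telescope_sumr (fun k => G k%:R)) //.
by apply: eq_big_nat => k /FG ->; rewrite natr1.
Qed.

Lemma Mentry_sym n i j k : Mentry n i j k = Mentry n j i k.
Proof. by rewrite /Mentry [Num.min i%:Z _]minC [i%:Z * _]mulrC [i%:Z + _]addrC. Qed.

(* When i + j > n the two arguments of the min differ by (n - j) (n - i - k). *)
Lemma Mentry_below n i j k : (i <= j <= n)%N -> (k <= minn j (n - i))%N ->
  Mentry n i j k = k%:Z * i%:Z.
Proof.
move=> /andP[ij jn] kt; rewrite /Mentry (min_l (_ : i%:Z <= j%:Z)) ?lez_nat //.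
case: (leqP (i + j) n) => ijn.
  by rewrite max_l ?mulr0 ?subr0 ?min_l; nia.
have kni : (k <= n - i)%N by lia.
by rewrite max_r ?min_l; nia.
Qed.

(* The truncated difference (i + j - n)%N is max(0, i + j - n). *)
Lemma Mentry_above n i j k : (i <= j <= n)%N -> (minn j (n - i) <= k <= n)%N ->
  Mentry n i j k = i%:Z * j%:Z - (n%:Z - k%:Z) * (i + j - n)%N%:Z.
Proof.
move=> /andP[ij jn] /andP[tk kn]; rewrite /Mentry (min_l (_ : i%:Z <= j%:Z)) ?lez_nat //.
case: (leqP (i + j) n) => ijn.
  have jk : (j <= k)%N by lia.
  rewrite max_l; last by lia.
  rewrite (_ : (i + j - n)%N = 0%N); last by lia.
  rewrite !mulr0 subr0 min_r //; nia.
have nik : (n - i <= k)%N by lia.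
have -> : ((i + j - n)%N : int) = i%:Z + j%:Z - n%:Z by lia.
rewrite max_r; last by lia.
rewrite min_r //; nia.
Qed.

Definition Mline n i j : rat := \sum_(k < n.+1) (Mentry n i j k)%:~R.

Lemma Mline_sym n i j : Mline n i j = Mline n j i.
Proof. by apply: eq_bigr => k _; rewrite Mentry_sym. Qed.

Lemma MlineE n i j t : (i <= j <= n)%N -> t = minn j (n - i) ->
  Mline n i j = i%:R * t%:R * (t%:R + 1) / 2
    + (n%:R - t%:R) * (i%:R * j%:R - (i + j - n)%N%:R * (n%:R - t%:R - 1) / 2).
Proof.
move=> ijn tE; have tn : (t <= n)%N by lia.
rewrite /Mline -(big_mkord xpredT (fun k => (Mentry n i j k)%:~R : rat)).
rewrite (big_cat_nat _ (n := t.+1)) //=.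
rewrite (big_nat_antidiff (G := fun x => i%:R * x * (x - 1) / 2)) //; last first.
  by move=> k /andP[_ kt]; rewrite Mentry_below ?intrM; [field | | lia].
rewrite (big_nat_antidiff
  (G := fun x => i%:R * j%:R * x - (i + j - n)%N%:R * (n%:R * x - x * (x - 1) / 2))) //; last first.
  by move=> k /andP[tk kn]; rewrite Mentry_above ?(intrM, intrB); [field | | lia].
by rewrite -[t.+1%:R]natr1 -[n.+1%:R]natr1; field.
Qed.

Lemma Mline_low n i j : (i <= j)%N -> (i + j <= n)%N ->
  Mline n i j = i%:R * (j%:R * (j%:R + 1) / 2 + j%:R * (n%:R - j%:R)).
Proof.
move=> ij ijn; rewrite (@MlineE n i j j); [|lia|lia].
by rewrite (_ : (i + j - n)%N = 0%N); [field | lia].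
Qed.

Lemma Mline_high n i j : (i <= j <= n)%N -> (n < i + j)%N ->
  Mline n i j = (i%:R * n%:R * (n%:R - i%:R) + i%:R * (i%:R + 1) * j%:R) / 2.
Proof.
move=> ijn nij; rewrite (@MlineE n i j (n - i)); [|lia|lia].
by rewrite !natrB ?natrD; [field | lia | lia].
Qed.

Definition Mrow n i : rat := \sum_(j < n.+1) Mline n i j.

Lemma Mrow_low n i : (i + i <= n)%N ->
  Mrow n i = (i%:R * n%:R * (n%:R + 1) * (2 * n%:R + 1)
              - (i%:R - 1) * i%:R ^+ 2 * (i%:R + 1)) / 6.
Proof.
move=> iin; rewrite /Mrow -(big_mkord xpredT (Mline n i)).
rewrite (big_cat_nat _ (n := i)) //=; last lia.
rewrite (big_cat_nat _ (n := (n - i).+1) (m := i)) //=; [|lia|lia].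
rewrite (big_nat_antidiff
  (G := fun x => (i%:R * (i%:R + 1) / 2 + i%:R * (n%:R - i%:R)) * x * (x - 1) / 2)) //; last first.
  by move=> j /andP[_ ji]; rewrite Mline_sym Mline_low; [field | lia | lia].
rewrite (big_nat_antidiff
  (G := fun x => i%:R * x * (x - 1) * (3 * n%:R + 2 - x) / 6)); last 2 first.
- lia.
- by move=> j /andP[ij jn]; rewrite Mline_low; [field | lia | lia].
rewrite (big_nat_antidiff
  (G := fun x => i%:R * n%:R * (n%:R - i%:R) * x / 2 + i%:R * (i%:R + 1) * x * (x - 1) / 4));
  last 2 first.
- lia.
- by move=> j /andP[nj jn]; rewrite Mline_high; [field | lia | lia].
by rewrite -[n.+1%:R]natr1 -[(n - i).+1%:R]natr1 natrB; [field | lia].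
Qed.

Lemma Mrow_high n i : (n < i + i)%N -> (i <= n)%N ->
  Mrow n i = (2 * i%:R * n%:R * (n%:R + 1) * (2 * n%:R + 1)
              - 2 * (i%:R - 1) * i%:R ^+ 2 * (i%:R + 1)
              + n%:R * (2 * i%:R - n%:R - 1) * (2 * i%:R - n%:R) * (2 * i%:R - n%:R + 1)) / 12.
Proof.
move=> nii iin; rewrite /Mrow -(big_mkord xpredT (Mline n i)).
rewrite (big_cat_nat _ (n := (n - i).+1)) //=; last lia.
rewrite (big_cat_nat _ (n := i) (m := (n - i).+1)) //=; [|lia|lia].
rewrite (big_nat_antidiff
  (G := fun x => (i%:R * (i%:R + 1) / 2 + i%:R * (n%:R - i%:R)) * x * (x - 1) / 2)) //; last first.
  by move=> j /andP[_ jni]; rewrite Mline_sym Mline_low; [field | lia | lia].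
rewrite (big_nat_antidiff (G := fun x => n%:R ^+ 2 * x * (x - 1) / 4
    - n%:R * x * (x - 1) * (2 * x - 1) / 12 + i%:R * (x - 1) * x * (x + 1) / 6)); last 2 first.
- lia.
- by move=> j /andP[nj ji]; rewrite Mline_sym Mline_high; [field | lia | lia].
rewrite (big_nat_antidiff
  (G := fun x => i%:R * n%:R * (n%:R - i%:R) * x / 2 + i%:R * (i%:R + 1) * x * (x - 1) / 4));
  last 2 first.
- lia.
- by move=> j /andP[ij jn]; rewrite Mline_high; [field | lia | lia].
by rewrite -[n.+1%:R]natr1 -[(n - i).+1%:R]natr1 natrB; [field | lia].
Qed.

Lemma sum_Mrow n :
  \sum_(i < n.+1) Mrow n i =
    n%:R ^+ 2 * (n%:R + 1) ^+ 2 * (2 * n%:R + 1) / 12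
    - (n%:R - 1) * n%:R * (n%:R + 1) * (n%:R + 2) * (2 * n%:R + 1) / 60
    + n%:R * ((n%:R - 1) * (n%:R + 1) ^+ 2 * (n%:R + 3) + 3 * (~~ odd n)%:R) / 96.
Proof.
have [m /andP[mn nm]] : exists m, (m * 2 <= n <= m * 2 + 1)%N by exists (n %/ 2)%N; lia.
(* [Mrow_high] exceeds the [Mrow_low] polynomial by n (s - 1) s (s + 1) / 12 with
   s = 2i - n; [low_sum] and [excess_sum] are indefinite sums in i of these two parts. *)
pose low_sum x := n%:R * (n%:R + 1) * (2 * n%:R + 1) * x * (x - 1) / 12
  - (x - 2) * (x - 1) * x * (x + 1) * (2 * x - 1) / 60 : rat.
pose excess_sum x :=
  n%:R * (2 * x - n%:R - 3) * (2 * x - n%:R - 1) ^+ 2 * (2 * x - n%:R + 1) / 96 : rat.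
rewrite -(big_mkord xpredT (Mrow n)) (big_cat_nat _ (n := m.+1)) //=; [|lia].
rewrite (big_nat_antidiff (G := low_sum)) //; last first.
  by move=> i /andP[_ im]; rewrite Mrow_low; [rewrite /low_sum; field | lia].
rewrite (big_nat_antidiff (G := fun x => low_sum x + excess_sum x)); last 2 first.
- lia.
- move=> i /andP[mi iN]; rewrite Mrow_high; [|lia|lia].
  by rewrite /low_sum /excess_sum; field.
rewrite -[n.+1%:R]natr1 -[m.+1%:R]natr1 /low_sum /excess_sum.
have [nE | nE] : n = (m * 2)%N \/ n = (m * 2).+1 by lia.
  by rewrite nE oddM andbF /= natrM; field.
by rewrite nE /= oddM andbF /= -natr1 natrM; field.
Qed.

Theorem mainTheorem10 (n : nat) (hn : (1 <= n)%N) :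
  ((\sum_(i < n.+1) \sum_(j < n.+1) \sum_(k < n.+1) Mentry n i j k)%:~R : rat) =
  (69 * n%:R ^+ 5 + 180 * n%:R ^+ 4 + 170 * n%:R ^+ 3 + 60 * n%:R ^+ 2
    + (4 : rat) ^ (1 + (-1) ^+ n : int) * n%:R) / 480.
Proof.
(* The identity also holds for n = 0. *)
have -> : ((\sum_(i < n.+1) \sum_(j < n.+1) \sum_(k < n.+1) Mentry n i j k)%:~R : rat)
    = \sum_(i < n.+1) Mrow n i.
  rewrite rmorph_sum; apply: eq_bigr => i _.
  by rewrite rmorph_sum; apply: eq_bigr => j _; rewrite rmorph_sum.
have -> : (4 : rat) ^ (1 + (-1) ^+ n : int) = if odd n then 1 else 16.
  by rewrite -signr_odd; case: (odd n).
by rewrite sum_Mrow; case: (odd n) => /=; field.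
Qed.
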